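(* Let $\pi:(X,T)\to(Y,S)$ be an almost one-to-one factor map between minimal systems. Then $(X,T)$ is syndetically equicontinuous if and only if $(Y,S)$ is syndetically equicontinuous.
   Context: Systems: compact metric $(X,\varrho)$ with continuous surjection; minimal: every orbit dense. Factor map: continuous surjection $\pi$ with $\pi\circ T=S\circ\pi$; almost one-to-one: $\{y\in Y:\pi^{-1}(y)\text{ is a singleton}\}$ is dense in $Y$. $S_T(U,\delta)=\{n\in\mathbb{N}:\exists x_1,x_2\in U,\ \varrho(T^nx_1,T^nx_2)>\delta\}$, $J_T(U,\delta)=\mathbb N\setminus S_T(U,\delta)$. A point $x$ is syndetically equicontinuous if for every $\varepsilon>0$ some neighborhood $U$ of $x$ has $J_T(U,\varepsilon)$ syndetic (bounded gaps); a system is syndetically equicontinuous if every point is. *)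

From Stdlib Require Import Reals List.
Open Scope R_scope.

Definition is_metric {X : Type} (d : X -> X -> R) : Prop :=
  (forall x y, 0 <= d x y) /\
  (forall x y, d x y = 0 <-> x = y) /\
  (forall x y, d x y = d y x) /\
  (forall x y z, d x z <= d x y + d y z).

Definition is_open {X : Type} (d : X -> X -> R) (U : X -> Prop) : Prop :=
  forall x, U x -> exists r, 0 < r /\ forall y, d x y < r -> U y.

Definition is_compact {X : Type} (d : X -> X -> R) : Prop :=
  forall F : (X -> Prop) -> Prop,
    (forall U, F U -> is_open d U) ->
    (forall x, exists U, F U /\ U x) ->
    exists l : list (X -> Prop),
      (forall U, In U l -> F U) /\ (forall x, exists U, In U l /\ U x).

Definition continuous_map {X Y : Type} (dX : X -> X -> R) (dY : Y -> Y -> R)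
  (f : X -> Y) : Prop :=
  forall x eps, 0 < eps -> exists del, 0 < del /\
    forall x', dX x x' < del -> dY (f x) (f x') < eps.

Definition surjective {X Y : Type} (f : X -> Y) : Prop :=
  forall y, exists x, f x = y.

Definition is_system {X : Type} (d : X -> X -> R) (T : X -> X) : Prop :=
  is_metric d /\ is_compact d /\ continuous_map d d T /\ surjective T.

Definition minimal {X : Type} (d : X -> X -> R) (T : X -> X) : Prop :=
  forall x y eps, 0 < eps -> exists n : nat, d (Nat.iter n T x) y < eps.

Definition factor_map {X Y : Type} (dX : X -> X -> R) (dY : Y -> Y -> R)
  (T : X -> X) (S : Y -> Y) (pi : X -> Y) : Prop :=
  continuous_map dX dY pi /\ surjective pi /\ (forall x, pi (T x) = S (pi x)).

Definition almost_one_to_one {X Y : Type} (dY : Y -> Y -> R) (pi : X -> Y) : Prop :=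
  forall y eps, 0 < eps -> exists y', dY y y' < eps /\
    exists x, forall x', pi x' = y' <-> x' = x.

Definition S_set {X : Type} (d : X -> X -> R) (T : X -> X) (U : X -> Prop)
  (delta : R) (n : nat) : Prop :=
  exists x1 x2, U x1 /\ U x2 /\ d (Nat.iter n T x1) (Nat.iter n T x2) > delta.

Definition J_set {X : Type} (d : X -> X -> R) (T : X -> X) (U : X -> Prop)
  (delta : R) (n : nat) : Prop :=
  ~ S_set d T U delta n.

Definition syndetic (A : nat -> Prop) : Prop :=
  exists L : nat, (0 < L)%nat /\
    forall m : nat, exists n : nat, (m <= n < m + L)%nat /\ A n.

Definition neighborhood {X : Type} (d : X -> X -> R) (x : X) (U : X -> Prop) : Prop :=
  exists V, is_open d V /\ V x /\ forall y, V y -> U y.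

Definition synd_equicont_point {X : Type} (d : X -> X -> R) (T : X -> X) (x : X) : Prop :=
  forall eps, 0 < eps -> exists U, neighborhood d x U /\ syndetic (J_set d T U eps).

Definition synd_equicont {X : Type} (d : X -> X -> R) (T : X -> X) : Prop :=
  forall x, synd_equicont_point d T x.

From Stdlib Require Import Reals List Lra Lia.
Open Scope R_scope.

(* Choose y0 in Y whose fibre is a single point x0.  By compactness, the
   pi-preimage of a small enough ball around y0 lies in any prescribed ball
   around x0, so small neighbourhoods of x0 and y0 correspond.  Downwards,
   uniform continuity of pi carries the syndetic set J_T(U, del) of a
   neighbourhood U of x0 into J_S(V, eps) for a ball V around y0.  Upwards,
   for n in J_S(V, del) the whole set S^n V is del-small, and by minimality
   and compactness some k < K brings S^n y0 back close to y0; the preimage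
   of V is then mapped by T^(n+k) into a small ball around x0, so J_T is
   syndetic, its gaps exceeding those of J_S by less than K.  Finally, in a minimal system a single
   point with such neighbourhoods suffices: every orbit enters them, and
   pulling back along T^k only shifts J by k. *)

Lemma iter_semiconj {X Y} (T : X -> X) (S : Y -> Y) (pi : X -> Y) :
  (forall x, pi (T x) = S (pi x)) ->
  forall n x, pi (Nat.iter n T x) = Nat.iter n S (pi x).
Proof.
  intros hpi n; induction n as [|n IH]; intros x; simpl; [reflexivity|].
  now rewrite hpi, IH.
Qed.

Lemma continuous_map_comp {X Y Z} dX dY dZ (f : X -> Y) (g : Y -> Z) :
  continuous_map dX dY f -> continuous_map dY dZ g ->
  continuous_map dX dZ (fun x => g (f x)).
Proof.
  intros hf hg x eps he.
  destruct (hg (f x) eps he) as [del1 [hdel1 H1]].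
  destruct (hf x del1 hdel1) as [del2 [hdel2 H2]].
  exists del2; split; [exact hdel2 | intros x' h; apply H1, H2, h].
Qed.

Lemma continuous_iter {X} d (T : X -> X) :
  continuous_map d d T -> forall k, continuous_map d d (Nat.iter k T).
Proof.
  intros hT k; induction k as [|k IH].
  - intros x eps he; exists eps; split; [exact he | now intros x' h].
  - exact (continuous_map_comp d d d _ _ IH hT).
Qed.

Lemma is_open_preimage {X Y} dX dY (f : X -> Y) (V : Y -> Prop) :
  continuous_map dX dY f -> is_open dY V -> is_open dX (fun z => V (f z)).
Proof.
  intros hf hV x hx. destruct (hV (f x) hx) as [r [hr Hr]].
  destruct (hf x r hr) as [del [hdel Hdel]].
  exists del; split; [exact hdel | intros y hy; apply Hr, Hdel, hy].
Qed.

Lemma is_open_const_and {X} d (P : Prop) (V : X -> Prop) :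
  (P -> is_open d V) -> is_open d (fun z => P /\ V z).
Proof.
  intros hV x [hP hx]. destruct (hV hP x hx) as [r [hr Hr]].
  exists r; split; [exact hr | intros y hy; split; [exact hP | apply Hr, hy]].
Qed.

Section Metric.
Variables (X : Type) (d : X -> X -> R).
Hypothesis hd : is_metric d.

Lemma dist_refl x : d x x = 0.
Proof. now apply hd. Qed.

Lemma dist_sym x y : d x y = d y x.
Proof. apply hd. Qed.

Lemma dist_triangle x y z : d x z <= d x y + d y z.
Proof. apply hd. Qed.

Lemma is_open_ball c r : is_open d (fun z => d c z < r).
Proof.
  intros x hx. exists (r - d c x); split; [lra|].
  intros y hy. pose proof (dist_triangle c x y). lra.
Qed.

Lemma is_open_dist_gt c r : is_open d (fun z => r < d c z).
Proof.
  intros x hx. exists (d c x - r); split; [lra|].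
  intros y hy. pose proof (dist_triangle c y x). rewrite (dist_sym y x) in *. lra.
Qed.

Lemma neighborhood_ball c r : 0 < r -> neighborhood d c (fun z => d c z < r).
Proof.
  intros hr. exists (fun z => d c z < r).
  split; [apply is_open_ball | split; [rewrite dist_refl; exact hr | easy]].
Qed.

End Metric.

Arguments dist_refl {X d}.
Arguments dist_sym {X d}.
Arguments dist_triangle {X d}.
Arguments is_open_ball {X d}.
Arguments is_open_dist_gt {X d}.
Arguments neighborhood_ball {X d}.

Lemma compact_finite_subcover {X I} (d : X -> X -> R) (U : I -> X -> Prop) :
  is_compact d -> (forall i, is_open d (U i)) -> (forall x, exists i, U i x) ->
  exists l : list I, forall x, exists i, In i l /\ U i x.
Proof.
  intros hc hU hcov.
  destruct (hc (fun V => exists i, V = U i)) as [l [hl hsub]].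
  - intros V [i ->]; apply hU.
  - intros x; destruct (hcov x) as [i hi].
    exists (U i); split; [now exists i | exact hi].
  - assert (hidx : exists li : list I, forall V, In V l -> exists i, In i li /\ V = U i).
    { clear hsub; induction l as [|V l IH].
      - exists nil; intros V [].
      - destruct (hl V (or_introl eq_refl)) as [i ->].
        destruct IH as [li hli]; [intros W hW; apply hl; now right|].
        exists (i :: li); intros W [<- | hW]; [exists i; split; [left|]; reflexivity|].
        destruct (hli W hW) as [j [hj ->]]; exists j; split; [now right | reflexivity]. }
    destruct hidx as [li hli]; exists li; intros x.
    destruct (hsub x) as [V [hV hx]]; destruct (hli V hV) as [i [hi ->]].
    now exists i.
Qed.

Lemma exists_pos_lower_bound (l : list R) :
  exists s, 0 < s /\ forall r, In r l -> 0 < r -> s <= r.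
Proof.
  induction l as [|r l [s [hs hl]]].
  - exists 1; split; [lra | intros r []].
  - destruct (Rlt_or_le 0 r) as [hr | hr].
    + exists (Rmin r s); split; [now apply Rmin_pos|].
      intros r' [<- | hr'] hpos; [apply Rmin_l|].
      eapply Rle_trans; [apply Rmin_r | now apply hl].
    + exists s; split; [exact hs|].
      intros r' [<- | hr'] hpos; [lra | now apply hl].
Qed.

Lemma compact_uniform_continuous {X Y} dX dY (f : X -> Y) :
  is_metric dX -> is_compact dX -> is_metric dY -> continuous_map dX dY f ->
  forall eps, 0 < eps -> exists del, 0 < del /\
    forall a b, dX a b < del -> dY (f a) (f b) < eps.
Proof.
  intros mX cX mY hf eps he.
  pose (good x del := 0 < del /\ forall x', dX x x' < del -> dY (f x) (f x') < eps / 2).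
  destruct (compact_finite_subcover dX
              (fun p z => good (fst p) (snd p) /\ dX (fst p) z < snd p / 2) cX)
    as [l hl].
  - intros [x del]; apply is_open_const_and; intros _; apply (is_open_ball mX).
  - intros x; destruct (hf x (eps / 2)) as [del [hdel H]]; [lra|].
    exists (x, del); simpl; split; [split; assumption | rewrite (dist_refl mX); lra].
  - destruct (exists_pos_lower_bound (map snd l)) as [s [hs hmin]].
    exists (s / 2); split; [lra|]; intros a b hab.
    destruct (hl a) as [[x del] [hin [[hdel H] ha]]]; simpl in *.
    assert (hsdel : s <= del) by (apply hmin; [exact (in_map snd l (x, del) hin) | exact hdel]).
    assert (hxb : dX x b < del) by (pose proof (dist_triangle mX x a b); lra).
    pose proof (H a ltac:(lra)); pose proof (H b hxb).
    pose proof (dist_triangle mY (f a) (f x) (f b)).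
    rewrite (dist_sym mY (f a) (f x)) in *; lra.
Qed.

Lemma compact_iter_uniform_continuous {X} d (T : X -> X) K eps :
  is_metric d -> is_compact d -> continuous_map d d T -> 0 < eps ->
  exists del, 0 < del /\ forall k a b, (k < K)%nat -> d a b < del ->
    d (Nat.iter k T a) (Nat.iter k T b) < eps.
Proof.
  intros m c hT he; induction K as [|K [del [hdel IH]]].
  - exists 1; split; [lra | intros k a b hk; lia].
  - destruct (compact_uniform_continuous d d (Nat.iter K T) m c m
                (continuous_iter d T hT K) eps he) as [del' [hdel' H]].
    exists (Rmin del del'); split; [now apply Rmin_pos|].
    intros k a b hk hab; destruct (Nat.lt_ge_cases k K) as [hlt | hge].
    + apply IH; [exact hlt | eapply Rlt_le_trans; [exact hab | apply Rmin_l]].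
    + replace k with K by lia; apply H.
      eapply Rlt_le_trans; [exact hab | apply Rmin_r].
Qed.

Lemma singleton_fibre_nbhd {X Y} dX dY (pi : X -> Y) x0 y0 r :
  is_metric dX -> is_compact dX -> is_metric dY -> continuous_map dX dY pi ->
  (forall z, pi z = y0 <-> z = x0) -> 0 < r ->
  exists s, 0 < s /\ forall z, dY y0 (pi z) < s -> dX x0 z < r.
Proof.
  intros mX cX mY hpi hfib hr.
  (* [None] is the ball around x0; [Some s] is the set where pi is s-far from y0. *)
  pose (U (o : option R) z :=
          match o with
          | None => dX x0 z < r
          | Some s => 0 < s /\ s < dY y0 (pi z)
          end).
  pose (radius (o : option R) := match o with Some s => s | None => 0 end).
  destruct (compact_finite_subcover dX U cX) as [l hl].
  - intros [s|]; simpl; [|apply (is_open_ball mX)].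
    apply is_open_const_and; intros _.
    apply (is_open_preimage _ _ _ (fun w => s < dY y0 w) hpi), (is_open_dist_gt mY).
  - intros z; destruct (Rlt_or_le (dX x0 z) r) as [hz | hz]; [now exists None|].
    assert (hpos : 0 < dY y0 (pi z)).
    { destruct (proj1 mY y0 (pi z)) as [hlt | heq]; [exact hlt|].
      assert (z = x0) as -> by (apply hfib; symmetry; now apply mY).
      rewrite (dist_refl mX) in hz; lra. }
    exists (Some (dY y0 (pi z) / 2)); simpl; split; lra.
  - destruct (exists_pos_lower_bound (map radius l)) as [s [hs hmin]].
    exists s; split; [exact hs|]; intros z hz.
    destruct (hl z) as [[s'|] [hin hU]]; simpl in hU; [|exact hU].
    destruct hU as [hs' hfar].
    pose proof (hmin s' (in_map radius l (Some s') hin) hs'); lra.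
Qed.

Lemma minimal_bounded_hitting_time {X} d (T : X -> X) x0 c :
  is_metric d -> is_compact d -> continuous_map d d T -> minimal d T -> 0 < c ->
  exists K, forall x, exists k, (k < K)%nat /\ d x0 (Nat.iter k T x) < c.
Proof.
  intros m cpt hT hmin hc.
  destruct (compact_finite_subcover d (fun k z => d x0 (Nat.iter k T z) < c) cpt)
    as [l hl].
  - intros k; apply (is_open_preimage d d _ (fun w => d x0 w < c)).
    + now apply continuous_iter.
    + apply (is_open_ball m).
  - intros x; destruct (hmin x x0 c hc) as [k hk].
    exists k; now rewrite (dist_sym m).
  - exists (1 + list_max l)%nat; intros x.
    destruct (hl x) as [k [hin hk]]; exists k; split; [|exact hk].
    assert (k <= list_max l)%nat
      by exact (proj1 (Forall_forall _ l) (proj1 (list_max_le l _) (le_n _)) k hin).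
    lia.
Qed.

Lemma syndetic_mono (A B : nat -> Prop) :
  (forall n, A n -> B n) -> syndetic A -> syndetic B.
Proof.
  intros hAB [L [hL hA]]; exists L; split; [exact hL|].
  intros m; destruct (hA m) as [n [hn An]]; exists n; split; [exact hn | now apply hAB].
Qed.

Lemma syndetic_bounded_shift (A B : nat -> Prop) K :
  syndetic A -> (forall n, A n -> exists k, (k < K)%nat /\ B (n + k)%nat) ->
  syndetic B.
Proof.
  intros [L [hL hA]] hAB; exists (L + K)%nat; split; [lia|].
  intros m; destruct (hA m) as [n [hn An]]; destruct (hAB n An) as [k [hk Bk]].
  exists (n + k)%nat; split; [lia | exact Bk].
Qed.

Lemma J_set_iter_preimage {X} d (T : X -> X) U eps k n :
  J_set d T U eps n -> J_set d T (fun z => U (Nat.iter k T z)) eps (n + k).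
Proof.
  intros hJ [x1 [x2 [h1 [h2 hfar]]]]; apply hJ.
  exists (Nat.iter k T x1), (Nat.iter k T x2).
  rewrite !Nat.iter_add in hfar; now repeat split.
Qed.

Lemma J_set_factor {X Y} dX dY (T : X -> X) (S : Y -> Y) (pi : X -> Y) U V del eps n :
  (forall x, pi (T x) = S (pi x)) ->
  (forall v, V v -> exists z, U z /\ pi z = v) ->
  (forall a b, dX a b <= del -> dY (pi a) (pi b) <= eps) ->
  J_set dX T U del n -> J_set dY S V eps n.
Proof.
  intros hcomm hlift hunif hJ [v1 [v2 [h1 [h2 hfar]]]].
  destruct (hlift v1 h1) as [z1 [hz1 <-]]; destruct (hlift v2 h2) as [z2 [hz2 <-]].
  rewrite <- !(iter_semiconj T S pi hcomm) in hfar.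
  apply hJ; exists z1, z2; repeat split; [exact hz1 | exact hz2|].
  apply Rnot_le_lt; intros hle; pose proof (hunif _ _ hle); lra.
Qed.

Lemma minimal_syndetic_nbhd_transfer {X} d (T : X -> X) x0 U eps x :
  is_metric d -> continuous_map d d T -> minimal d T ->
  neighborhood d x0 U -> syndetic (J_set d T U eps) ->
  exists U', neighborhood d x U' /\ syndetic (J_set d T U' eps).
Proof.
  intros m hT hmin [V [hV [Vx0 VU]]] hsynd.
  destruct (hV x0 Vx0) as [r [hr Hr]].
  destruct (hmin x x0 r hr) as [k hk].
  exists (fun z => U (Nat.iter k T z)); split.
  - exists (fun z => V (Nat.iter k T z)); repeat split.
    + apply (is_open_preimage d d); [now apply continuous_iter | exact hV].
    + apply Hr; now rewrite (dist_sym m).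
    + intros z hz; now apply VU.
  - apply (syndetic_bounded_shift _ _ (1 + k) hsynd); intros n hn.
    exists k; split; [lia | now apply J_set_iter_preimage].
Qed.

Lemma synd_equicont_factor {X Y} dX dY (T : X -> X) (S : Y -> Y) (pi : X -> Y) :
  is_metric dX -> is_compact dX -> is_metric dY -> continuous_map dY dY S ->
  minimal dY S -> factor_map dX dY T S pi -> almost_one_to_one dY pi ->
  synd_equicont dX T -> synd_equicont dY S.
Proof.
  intros mX cX mY hS hmin [hpic [hpis hcomm]] h1 HX y eps he.
  destruct (h1 y 1 ltac:(lra)) as [y0 [_ [x0 hfib]]].
  destruct (compact_uniform_continuous dX dY pi mX cX mY hpic eps he) as [del [hdel Hdel]].
  destruct (HX x0 (del / 2) ltac:(lra)) as [U [[W [hW [Wx0 WU]]] hsynd]].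
  destruct (hW x0 Wx0) as [r [hr Hr]].
  destruct (singleton_fibre_nbhd dX dY pi x0 y0 r mX cX mY hpic hfib hr) as [s [hs Hs]].
  apply (minimal_syndetic_nbhd_transfer dY S y0 (fun w => dY y0 w < s) eps y mY hS hmin).
  - now apply neighborhood_ball.
  - revert hsynd; apply syndetic_mono; intros n.
    apply (J_set_factor dX dY T S pi); [exact hcomm | |].
    + intros v hv; destruct (hpis v) as [z <-].
      exists z; split; [apply WU, Hr, Hs, hv | reflexivity].
    + intros a b hab; left; apply Hdel; lra.
Qed.

Lemma synd_equicont_lift {X Y} dX dY (T : X -> X) (S : Y -> Y) (pi : X -> Y) :
  is_metric dX -> is_compact dX -> continuous_map dX dX T -> minimal dX T ->
  is_metric dY -> is_compact dY -> continuous_map dY dY S -> minimal dY S ->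
  factor_map dX dY T S pi -> almost_one_to_one dY pi ->
  synd_equicont dY S -> synd_equicont dX T.
Proof.
  intros mX cX hT hXmin mY cY hS hYmin [hpic [_ hcomm]] h1 HY x eps he.
  destruct (h1 (pi x) 1 ltac:(lra)) as [y0 [_ [x0 hfib]]].
  destruct (singleton_fibre_nbhd dX dY pi x0 y0 (eps / 2) mX cX mY hpic hfib ltac:(lra))
    as [s [hs Hs]].
  destruct (minimal_bounded_hitting_time dY S y0 (s / 2) mY cY hS hYmin ltac:(lra))
    as [K HK].
  destruct (compact_iter_uniform_continuous dY S K (s / 2) mY cY hS ltac:(lra))
    as [del [hdel Hdel]].
  destruct (HY y0 (del / 2) ltac:(lra)) as [V [[W [hW [Wy0 WV]]] hsynd]].
  destruct (hW y0 Wy0) as [r [hr Hr]].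
  pose (U z := dY y0 (pi z) < r).
  assert (hx0 : pi x0 = y0) by now apply hfib.
  apply (minimal_syndetic_nbhd_transfer dX T x0 U eps x mX hT hXmin).
  - exists U; repeat split; [| |easy].
    + apply (is_open_preimage _ _ _ (fun w => dY y0 w < r) hpic), (is_open_ball mY).
    + unfold U; rewrite hx0, (dist_refl mY); exact hr.
  - apply (syndetic_bounded_shift _ _ K hsynd); intros n hn.
    destruct (HK (Nat.iter n S y0)) as [k [hk Hk]]; exists k; split; [exact hk|].
    assert (hreturn : forall z, U z -> dX x0 (Nat.iter (n + k) T z) < eps / 2).
    { intros z hz; apply Hs.
      rewrite Nat.add_comm, Nat.iter_add, !(iter_semiconj T S pi hcomm).
      assert (hclose : dY (Nat.iter n S y0) (Nat.iter n S (pi z)) < del).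
      { apply Rnot_le_lt; intros hfar; apply hn.
        exists y0, (pi z); repeat split; [apply WV, Wy0 | apply WV, Hr, hz | lra]. }
      pose proof (Hdel k _ _ hk hclose).
      pose proof (dist_triangle mY y0 (Nat.iter k S (Nat.iter n S y0))
                    (Nat.iter k S (Nat.iter n S (pi z)))); lra. }
    intros [z1 [z2 [hz1 [hz2 hfar]]]].
    pose proof (hreturn z1 hz1); pose proof (hreturn z2 hz2).
    pose proof (dist_triangle mX (Nat.iter (n + k) T z1) x0 (Nat.iter (n + k) T z2)).
    rewrite (dist_sym mX (Nat.iter (n + k) T z1) x0) in *; lra.
Qed.

Theorem proposition4p9 (X Y : Type) (dX : X -> X -> R) (dY : Y -> Y -> R)
  (T : X -> X) (S : Y -> Y) (pi : X -> Y)
  (hX : is_system dX T) (hY : is_system dY S)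
  (hXmin : minimal dX T) (hYmin : minimal dY S)
  (hpi : factor_map dX dY T S pi) (h1 : almost_one_to_one dY pi) :
  synd_equicont dX T <-> synd_equicont dY S.
Proof.
  destruct hX as [mX [cX [hT _]]]; destruct hY as [mY [cY [hS _]]].
  split.
  - now apply (synd_equicont_factor dX dY T S pi).
  - now apply (synd_equicont_lift dX dY T S pi).
Qed.
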